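(* Let $K$ be a field, $p\colon A\to B$ a morphism of cocommutative Hopf algebras over $K$, and $i\colon C\to B$ the inclusion of a Hopf subalgebra $C$ of $B$. Let $p^{-1}(C)=\{x\in A \mid (p\otimes \mathrm{id}_A)\Delta(x)-1\otimes x\in C^+\otimes A\}$, let $j\colon p^{-1}(C)\to A$ be the inclusion and $\hat p\colon p^{-1}(C)\to C$ the restriction of $p$. Then $p(p^{-1}(C))\subseteq C$ (so $\hat p$ is well defined) and the square with $i\circ \hat p = p\circ j$ is a pullback in the category $\mathsf{Hopf}_{K,coc}$ of cocommutative Hopf algebras over $K$.
   Context: For a coalgebra $C$ with counit $\epsilon$, $C^+=\{x\in C\mid \epsilon(x)=0\}$. $p^{-1}(C)$ is a Hopf subalgebra of $A$ (the h-inverse of $C$ along $p$). Morphisms in $\mathsf{Hopf}_{K,coc}$ are linear maps that are algebra and coalgebra morphisms. *)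

From HB Require Import structures.
From mathcomp Require Import all_boot all_algebra.
From Stdlib Require List.
Set Implicit Arguments. Unset Strict Implicit. Unset Printing Implicit Defensive.
Import GRing.Theory.
Local Open Scope ring_scope.

Section Hopf.
Variable K : fieldType.

(* An element of V (x) W is written as a finite sum  sum_i v_i (x) w_i,
   represented by the list of pairs (v_i, w_i).  Two such representations
   denote the same element of V (x) W iff every bilinear map out of V x W
   (into any K-vector space M) takes the same value on them (universal
   property of the tensor product). *)
Definition bilin (V W M : lmodType K) (f : V -> W -> M) : Prop :=
  (forall (a : K) v v' w, f (a *: v + v') w = a *: f v w + f v' w) /\
  (forall (a : K) v w w', f v (a *: w + w') = a *: f v w + f v w').

Definition trilin (U V W M : lmodType K) (f : U -> V -> W -> M) : Prop :=
  (forall (a : K) u u' v w, f (a *: u + u') v w = a *: f u v w + f u' v w) /\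
  (forall (a : K) u v v' w, f u (a *: v + v') w = a *: f u v w + f u v' w) /\
  (forall (a : K) u v w w', f u v (a *: w + w') = a *: f u v w + f u v w').

Definition tens_eq (V W : lmodType K) (t t' : seq (V * W)) : Prop :=
  forall (M : lmodType K) (f : V -> W -> M), bilin f ->
    \sum_(q <- t) f q.1 q.2 = \sum_(q <- t') f q.1 q.2.

Definition tens3_eq (U V W : lmodType K) (t t' : seq (U * V * W)) : Prop :=
  forall (M : lmodType K) (f : U -> V -> W -> M), trilin f ->
    \sum_(q <- t) f q.1.1 q.1.2 q.2 = \sum_(q <- t') f q.1.1 q.1.2 q.2.

Definition lin_map (V W : lmodType K) (f : V -> W) : Prop :=
  forall (a : K) v v', f (a *: v + v') = a *: f v + f v'.

Record hopfType := Hopf {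
  hcar :> algType K;
  cop : hcar -> seq (hcar * hcar);
  cou : hcar -> K;
  ant : hcar -> hcar;
  cop_lin : forall (a : K) x y,
    tens_eq (cop (a *: x + y))
            ([seq (a *: q.1, q.2) | q <- cop x] ++ cop y);
  cou_lin : forall (a : K) x y, cou (a *: x + y) = a * cou x + cou y;
  ant_lin : lin_map ant;
  coassoc : forall x,
    tens3_eq [seq (r.1, r.2, q.2) | q <- cop x, r <- cop q.1]
             [seq (q.1, r.1, r.2) | q <- cop x, r <- cop q.2];
  counitl : forall x, \sum_(q <- cop x) cou q.1 *: q.2 = x;
  counitr : forall x, \sum_(q <- cop x) cou q.2 *: q.1 = x;
  cop1 : tens_eq (cop 1) [:: (1, 1)];
  copM : forall x y,
    tens_eq (cop (x * y)) [seq (q.1 * r.1, q.2 * r.2) | q <- cop x, r <- cop y];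
  cou1 : cou 1 = 1;
  couM : forall x y, cou (x * y) = cou x * cou y;
  antipodel : forall x, \sum_(q <- cop x) ant q.1 * q.2 = (cou x)%:A;
  antipoder : forall x, \sum_(q <- cop x) q.1 * ant q.2 = (cou x)%:A;
  cocomm : forall x, tens_eq (cop x) [seq (q.2, q.1) | q <- cop x]
}.

Definition hopf_morph (A B : hopfType) (f : A -> B) : Prop :=
  [/\ lin_map f, f 1 = 1, (forall x y, f (x * y) = f x * f y),
      (forall x, cou (f x) = cou x) &
      (forall x, tens_eq (cop (f x)) [seq (f q.1, f q.2) | q <- cop x])].

Definition hopf_subalg (B : hopfType) (C : B -> Prop) : Prop :=
  [/\ C 1, (forall (a : K) x y, C x -> C y -> C (a *: x + y)),
      (forall x y, C x -> C y -> C (x * y)),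
      (forall x, C x -> C (ant x)) &
      (forall x, C x -> exists t : seq (B * B),
          List.Forall (fun q => C q.1 /\ C q.2) t /\ tens_eq (cop x) t)].

Definition augm (B : hopfType) (C : B -> Prop) (x : B) : Prop :=
  C x /\ cou x = 0.

Definition hinv (A B : hopfType) (p : A -> B) (C : B -> Prop) (x : A) : Prop :=
  exists t : seq (B * A), List.Forall (fun q => augm C q.1) t /\
    tens_eq ([seq (p q.1, q.2) | q <- cop x] ++ [:: (- 1, x)]) t.

End Hopf.

(* Applying [id (x) cou] to the tensor [(p (x) id) Delta x - 1 (x) x] gives [p x - cou x 1], so
   [p x \in C] for [x \in p^{-1}(C)].  The defining condition of [p^{-1}(C)] is linear and is
   preserved by products (as [C^+] is closed under multiplication by [C]) and by the antipode,
   which for a cocommutative Hopf algebra is a coalgebra map commuting with [p].  Cocommutativity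
   also makes [p^{-1}(C)] stable under the contractions [x |-> sum phi(x(1)) x(2)] by linear
   forms [phi]; writing [Delta x] as a sum of tensors with linearly independent left and right
   factors, every factor is such a contraction of [x], so [Delta x] lies in
   [p^{-1}(C) (x) p^{-1}(C)].  Finally, if [p o f] lands in [C] then
   [(p (x) id) Delta (f d) - 1 (x) f d = sum (p (f d(1)) - cou d(1) 1) (x) f d(2)] has left
   factors in [C^+], so [f] factors, necessarily uniquely, through the subset [p^{-1}(C)]. *)

From HB Require Import structures.
From mathcomp Require Import all_boot all_algebra.
From mathcomp Require classical_sets.
From Stdlib Require Import Classical ClassicalEpsilon FunctionalExtensionality ProofIrrelevance.
Import GRing.Theory.
Local Open Scope ring_scope.
Set Implicit Arguments. Unset Strict Implicit. Unset Printing Implicit Defensive.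

(** * Linear and multilinear maps *)

Section LinearMaps.
Variable K : fieldType.

(* [lin_map f] is MathComp's [linear f], so [f] can be packed as a [{linear _ -> _}]. *)
Definition linear_of (V W : lmodType K) (f : V -> W) (f_lin : lin_map f) : {linear V -> W} :=
  HB.pack f (GRing.isLinear.Build K V W *:%R f f_lin).

Section LinMapTheory.
Variables (V W : lmodType K) (f : V -> W).
Hypothesis f_lin : lin_map f.

Lemma lin_mapD x y : f (x + y) = f x + f y. Proof. exact: (linearD (linear_of f_lin)). Qed.
Lemma lin_mapZ a x : f (a *: x) = a *: f x. Proof. exact: (linearZ_LR (linear_of f_lin)). Qed.
Lemma lin_mapN x : f (- x) = - f x. Proof. exact: (linearN (linear_of f_lin)). Qed.
Lemma lin_mapB x y : f (x - y) = f x - f y. Proof. exact: (linearB (linear_of f_lin)). Qed.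
Lemma lin_map_sum I (s : seq I) (P : pred I) (F : I -> V) :
  f (\sum_(i <- s | P i) F i) = \sum_(i <- s | P i) f (F i).
Proof. exact: (linear_sum (linear_of f_lin)). Qed.

End LinMapTheory.

Definition lin_form (V : lmodType K) (phi : V -> K) := @lin_map K V K^o phi.

Section LinFormTheory.
Variables (V : lmodType K) (phi : V -> K).
Hypothesis phi_lin : lin_form phi.

Lemma lin_formZ a x : phi (a *: x) = a * phi x.
Proof. exact: (linearZ_LR (linear_of phi_lin)). Qed.
Lemma lin_formB x y : phi (x - y) = phi x - phi y.
Proof. exact: (linearB (linear_of phi_lin)). Qed.
Lemma lin_form_sum I (s : seq I) (F : I -> V) :
  phi (\sum_(i <- s) F i) = \sum_(i <- s) phi (F i).
Proof. exact: (linear_sum (linear_of phi_lin)). Qed.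

End LinFormTheory.

Lemma lin_map_comp (U V W : lmodType K) (f : V -> W) (g : U -> V) :
  lin_map f -> lin_map g -> lin_map (fun x => f (g x)).
Proof. by move=> f_lin g_lin a x y; rewrite g_lin f_lin. Qed.

Lemma lin_map_sumf I (s : seq I) (V W : lmodType K) (F : I -> V -> W) :
  (forall i, lin_map (F i)) -> lin_map (fun x => \sum_(i <- s) F i x).
Proof.
by move=> F_lin a x y; rewrite scaler_sumr -big_split; apply: eq_bigr => i _; apply: F_lin.
Qed.

Lemma lin_map_scale (V W : lmodType K) (f : V -> W) (c : K) :
  lin_map f -> lin_map (fun x => c *: f x).
Proof. by move=> f_lin a x y; rewrite f_lin scalerDr !scalerA mulrC. Qed.

Lemma lin_map_scale_form (V W : lmodType K) (phi : V -> K) (w : W) :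
  lin_form phi -> lin_map (fun x => phi x *: w).
Proof. by move=> phi_lin a x y; rewrite phi_lin scalerDl scalerA. Qed.

Lemma lin_map_mulr (R : algType K) (c : R) : lin_map (fun x : R => x * c).
Proof. by move=> a x y; rewrite mulrDl scalerAl. Qed.

Lemma lin_map_mull (R : algType K) (c : R) : lin_map (fun x : R => c * x).
Proof. by move=> a x y; rewrite mulrDr scalerAr. Qed.

Section Multilinear.
Implicit Types U V W M : lmodType K.

Lemma bilin_linl V W M (F : V -> W -> M) w : bilin F -> lin_map (F ^~ w).
Proof. by case=> F_linl _ a v v'; apply: F_linl. Qed.

Lemma bilin_linr V W M (F : V -> W -> M) v : bilin F -> lin_map (F v).
Proof. by case=> _ F_linr a w w'; apply: F_linr. Qed.

Lemma bilinP V W M (F : V -> W -> M) :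
  (forall w, lin_map (F ^~ w)) -> (forall v, lin_map (F v)) -> bilin F.
Proof. by move=> F_linl F_linr; split=> a v v' w; [apply: F_linl|apply: F_linr]. Qed.

Lemma trilinP U V W M (F : U -> V -> W -> M) :
  (forall v w, lin_map (fun u => F u v w)) -> (forall u w, lin_map (fun v => F u v w)) ->
  (forall u v, lin_map (F u v)) -> trilin F.
Proof. by move=> F1 F2 F3; split; [|split]=> *; [apply: F1|apply: F2|apply: F3]. Qed.

Lemma bilin_comp V W V' W' M (F : V -> W -> M) (f : V' -> V) (g : W' -> W) :
  bilin F -> lin_map f -> lin_map g -> bilin (fun a b => F (f a) (g b)).
Proof.
move=> F_bil f_lin g_lin; apply: bilinP => [w|v].
- exact: lin_map_comp (bilin_linl _ F_bil) f_lin.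
- exact: lin_map_comp (bilin_linr _ F_bil) g_lin.
Qed.

Lemma lin_map_bilin_comp V W M M' (h : M -> M') (F : V -> W -> M) :
  lin_map h -> bilin F -> bilin (fun a b => h (F a b)).
Proof.
move=> h_lin F_bil; apply: bilinP => *.
- exact: lin_map_comp h_lin (bilin_linl _ F_bil).
- exact: lin_map_comp h_lin (bilin_linr _ F_bil).
Qed.

Lemma bilin_flip V W M (F : V -> W -> M) : bilin F -> bilin (fun b a => F a b).
Proof. by case=> F_linl F_linr; split=> *; [apply: F_linr|apply: F_linl]. Qed.

Lemma bilin_scale_form V W (phi : V -> K) : lin_form phi -> bilin (fun a (b : W) => phi a *: b).
Proof.
move=> phi_lin; apply: bilinP => [w|v]; first exact: lin_map_scale_form.
by move=> a w w'; rewrite scalerDr !scalerA mulrC.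
Qed.

End Multilinear.

Lemma bilin_mul (R : algType K) : bilin (@GRing.mul R).
Proof. by apply: bilinP => c; [apply: lin_map_mulr|apply: lin_map_mull]. Qed.

Lemma lin_map_id (V : lmodType K) : lin_map (fun x : V => x). Proof. by []. Qed.

End LinearMaps.

Arguments lin_map_id {K} V.

(** * Sweedler sums *)

Section HopfTheory.
Variables (K : fieldType) (H : hopfType K).
Implicit Types (M W : lmodType K) (x y : H).

Definition sweedler M x (F : H -> H -> M) := \sum_(q <- cop x) F q.1 q.2.

Lemma eq_sweedler M x (F G : H -> H -> M) :
  (forall a b, F a b = G a b) -> sweedler x F = sweedler x G.
Proof. by move=> eFG; apply: eq_bigr => q _; rewrite eFG. Qed.

Lemma lin_map_sweedler M (F : H -> H -> M) : bilin F -> lin_map (fun x => sweedler x F).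
Proof.
move=> F_bil a x y; rewrite /sweedler (cop_lin a x y F_bil) big_cat big_map /=.
rewrite scaler_sumr; congr (_ + _).
by apply: eq_bigr => q _; rewrite (lin_mapZ (bilin_linl _ F_bil)).
Qed.

Lemma lin_map_sweedler_param W M y (E : W -> H -> H -> M) :
  (forall u v, lin_map (fun a => E a u v)) -> lin_map (fun a => sweedler y (E a)).
Proof. by move=> E_lin; apply: lin_map_sumf => q; apply: E_lin. Qed.

Lemma cou_lin_form : lin_form (@cou K H). Proof. exact: cou_lin. Qed.
Lemma ant_lin_map : lin_map (@ant K H). Proof. exact: ant_lin. Qed.

Lemma sweedler_counitl W (f : H -> W) x : lin_map f -> sweedler x (fun a b => cou a *: f b) = f x.
Proof.
move=> f_lin; rewrite -{2}(counitl x) (lin_map_sum f_lin).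
by apply: eq_bigr => q _; rewrite (lin_mapZ f_lin).
Qed.

Lemma sweedler_counitr W (f : H -> W) x : lin_map f -> sweedler x (fun a b => cou b *: f a) = f x.
Proof.
move=> f_lin; rewrite -{2}(counitr x) (lin_map_sum f_lin).
by apply: eq_bigr => q _; rewrite (lin_mapZ f_lin).
Qed.

Lemma sweedler_cocomm M (F : H -> H -> M) x : bilin F ->
  sweedler x F = sweedler x (fun a b => F b a).
Proof. by move=> F_bil; rewrite /sweedler (cocomm x F_bil) big_map. Qed.

Lemma sweedler_coassoc M (g : H -> H -> H -> M) x : trilin g ->
  sweedler x (fun u v => sweedler u (fun a b => g a b v)) =
  sweedler x (fun u v => sweedler v (g u)).
Proof. by move=> g_tri; have := coassoc x g_tri; rewrite !big_allpairs_dep. Qed.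

Lemma sweedler_mul M (F : H -> H -> M) x y : bilin F ->
  sweedler (x * y) F = sweedler x (fun a b => sweedler y (fun c d => F (a * c) (b * d))).
Proof. by move=> F_bil; rewrite /sweedler (copM x y F_bil) big_allpairs_dep. Qed.

Lemma sweedler1 M (F : H -> H -> M) : bilin F -> sweedler 1 F = F 1 1.
Proof. by move=> F_bil; rewrite /sweedler (cop1 F_bil) big_seq1. Qed.

Lemma sweedler_antipodel W (f : H -> W) x : lin_map f ->
  sweedler x (fun a b => f (ant a * b)) = cou x *: f 1.
Proof. by move=> f_lin; rewrite -(lin_mapZ f_lin) -antipodel (lin_map_sum f_lin). Qed.

Lemma sweedler_antipoder W (f : H -> W) x : lin_map f ->
  sweedler x (fun a b => f (a * ant b)) = cou x *: f 1.
Proof. by move=> f_lin; rewrite -(lin_mapZ f_lin) -antipoder (lin_map_sum f_lin). Qed.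

Lemma cou_alg (k : K) : cou (k%:A : H) = k.
Proof. by rewrite (lin_formZ cou_lin_form) cou1 mulr1. Qed.

Lemma ant1 : ant (1 : H) = 1.
Proof.
have := sweedler_antipoder 1 (lin_map_id H).
rewrite sweedler1 ?mul1r ?cou1 ?scale1r //.
exact: bilin_comp (bilin_mul H) (lin_map_id H) ant_lin_map.
Qed.

Lemma cou_ant x : cou (ant x) = cou x.
Proof.
have cou_ant_lin := lin_map_comp cou_lin_form ant_lin_map.
rewrite -(sweedler_counitr x cou_ant_lin) -[cou x in RHS]cou_alg -antipodel.
rewrite (lin_form_sum cou_lin_form).
by apply: eq_bigr => q _; rewrite couM mulrC.
Qed.

End HopfTheory.

Section HopfMorphism.
Variables (K : fieldType) (A B : hopfType K) (p : A -> B).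
Hypothesis p_morph : hopf_morph p.

Lemma hmorph_lin : lin_map p. Proof. by case: p_morph. Qed.
Lemma hmorph1 : p 1 = 1. Proof. by case: p_morph. Qed.
Lemma hmorphM x y : p (x * y) = p x * p y. Proof. by case: p_morph. Qed.
Lemma hmorph_cou x : cou (p x) = cou x. Proof. by case: p_morph. Qed.

Lemma sweedler_hmorph (M : lmodType K) (F : B -> B -> M) x : bilin F ->
  sweedler (p x) F = sweedler x (fun a b => F (p a) (p b)).
Proof. by case: p_morph => _ _ _ _ p_cop F_bil; rewrite /sweedler (p_cop x _ _ F_bil) big_map. Qed.

(* [p \o ant] and [ant \o p] are both convolution inverses of [p]. *)
Lemma hmorph_ant a : p (ant a) = ant (p a).
Proof.
have p_lin := hmorph_lin; have ant_lin := @ant_lin_map K.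
pose g u c d := p (ant u) * (p c * ant (p d)).
have g_tri : trilin g.
  apply: trilinP => *.
  - exact: lin_map_comp (lin_map_mulr _) (lin_map_comp p_lin (ant_lin _)).
  - exact: lin_map_comp (lin_map_mull _) (lin_map_comp (lin_map_mulr _) p_lin).
  - exact: lin_map_comp (lin_map_mull _) (lin_map_comp (lin_map_mull _)
                                           (lin_map_comp (ant_lin _) p_lin)).
have antipode_r u v : sweedler v (g u) = cou v *: p (ant u).
  rewrite -(hmorph_cou v) -[p (ant u)]mulr1 -(sweedler_antipoder _ (lin_map_mull _)).
  rewrite sweedler_hmorph //; apply: lin_map_bilin_comp (lin_map_mull _) _.
  exact: bilin_comp (bilin_mul B) (lin_map_id B) (ant_lin B).
have antipode_l u v : sweedler u (fun c d => g c d v) = cou u *: ant (p v).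
  rewrite /g; under eq_sweedler do rewrite mulrA -hmorphM.
  by rewrite (sweedler_antipodel _ (lin_map_comp (lin_map_mulr _) p_lin)) hmorph1 mul1r.
rewrite -(sweedler_counitr a (lin_map_comp p_lin (ant_lin _))).
rewrite -(sweedler_counitl a (lin_map_comp (ant_lin _) p_lin)).
under eq_sweedler do rewrite -antipode_r.
by rewrite -sweedler_coassoc //; apply: eq_sweedler => u v; rewrite antipode_l.
Qed.

End HopfMorphism.

Section FourfoldSweedler.
Variables (K : fieldType) (H : hopfType K).
Implicit Types (M : lmodType K) (x y : H).

Lemma sweedler_exchange M x y (E : H -> H -> H -> H -> M) :
  sweedler x (fun a b => sweedler y (E a b)) =
  sweedler y (fun c d => sweedler x (fun a b => E a b c d)).
Proof. exact: exchange_big. Qed.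

Definition quadrilin M (G : H -> H -> H -> H -> M) :=
  [/\ forall b c d, lin_map (fun a => G a b c d), forall a c d, lin_map (fun b => G a b c d),
      forall a b d, lin_map (fun c => G a b c d) & forall a b c, lin_map (G a b c)].

Lemma quadrilin_swap M (G : H -> H -> H -> H -> M) :
  quadrilin G -> quadrilin (fun a b => G b a).
Proof. by case=> G1 G2 G3 G4; split. Qed.

Definition sweedler4 M (G : H -> H -> H -> H -> M) x :=
  sweedler x (fun u v => sweedler u (fun a b => sweedler v (G a b))).

Lemma sweedler4_swap M (G : H -> H -> H -> H -> M) x :
  quadrilin G -> sweedler4 G x = sweedler4 (fun a b => G b a) x.
Proof.
case=> G1 G2 _ _; apply: eq_sweedler => u v; rewrite sweedler_cocomm //.
by apply: bilinP => *; apply: lin_map_sweedler_param => *; [apply: G1|apply: G2].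
Qed.

Lemma sweedler4_right M (G : H -> H -> H -> H -> M) x : quadrilin G ->
  sweedler4 G x = sweedler x (fun a u => sweedler u (fun b w => sweedler w (G a b))).
Proof.
case=> G1 G2 G3 G4; apply: (sweedler_coassoc (g := fun a b c => sweedler c (G a b))).
apply: trilinP => *; [apply: lin_map_sweedler_param => *; apply: G1|
                      apply: lin_map_sweedler_param => *; apply: G2|].
by apply: lin_map_sweedler; apply: bilinP => *; [apply: G3|apply: G4].
Qed.

Lemma sweedler4_middle M (G : H -> H -> H -> H -> M) x : quadrilin G ->
  sweedler4 G x =
  sweedler x (fun a u => sweedler u (fun w d => sweedler w (fun b c => G a b c d))).
Proof.
move=> G_quad; rewrite sweedler4_right //; apply: eq_sweedler => a u.
case: G_quad => _ G2 G3 G4; rewrite -(sweedler_coassoc (g := G a)) //.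
by apply: trilinP => *; [apply: G2|apply: G3|apply: G4].
Qed.

End FourfoldSweedler.

Section AntipodeCoalgebraMorphism.
Variables (K : fieldType) (H : hopfType K).
Implicit Types (M : lmodType K) (x y : H).

Lemma sweedler4_mul_ant M (F : H -> H -> M) y : bilin F ->
  sweedler4 (fun a b c d => F (a * ant c) (b * ant d)) y = cou y *: F 1 1.
Proof.
move=> F_bil; have ant_lin := @ant_lin_map K H.
have Fl z : lin_map (F ^~ z) := bilin_linl z F_bil.
have Fr z : lin_map (F z) := bilin_linr z F_bil.
have G_quad : quadrilin (fun a b c d => F (a * ant c) (b * ant d)).
  split=> *; [exact: lin_map_comp (Fl _) (lin_map_mulr _)|
              exact: lin_map_comp (Fr _) (lin_map_mulr _)|
              exact: lin_map_comp (Fl _) (lin_map_comp (lin_map_mull _) ant_lin)|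
              exact: lin_map_comp (Fr _) (lin_map_comp (lin_map_mull _) ant_lin)].
rewrite sweedler4_swap // sweedler4_middle; last exact: quadrilin_swap.
under eq_sweedler => a u.
  under eq_sweedler => w d do rewrite (sweedler_antipoder _ (Fl _)).
  rewrite (sweedler_counitl _ (lin_map_comp (Fr 1) (lin_map_comp (lin_map_mull a) ant_lin))).
  over.
by rewrite (sweedler_antipoder _ (Fr 1)).
Qed.

(* Both [Delta \o ant] and [(ant (x) ant) \o Delta] are convolution inverses of [Delta];
   [G] below is the four-fold product through which they are compared. *)
Lemma sweedler_ant M (F : H -> H -> M) x : bilin F ->
  sweedler (ant x) F = sweedler x (fun a b => F (ant a) (ant b)).
Proof.
move=> F_bil; have ant_lin := @ant_lin_map K H.
have Fl z : lin_map (F ^~ z) := bilin_linl z F_bil.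
have Fr z : lin_map (F z) := bilin_linr z F_bil.
pose G a b c d := sweedler (ant a * b) (fun u v => F (u * ant c) (v * ant d)).
have FS_bil c d : bilin (fun u v => F (u * ant c) (v * ant d)).
  exact: bilin_comp F_bil (lin_map_mulr _) (lin_map_mulr _).
have G_quad : quadrilin G.
  split=> *.
  - exact: lin_map_comp (lin_map_sweedler (FS_bil _ _)) (lin_map_comp (lin_map_mulr _) ant_lin).
  - exact: lin_map_comp (lin_map_sweedler (FS_bil _ _)) (lin_map_mull _).
  - apply: lin_map_sweedler_param => *.
    exact: lin_map_comp (Fl _) (lin_map_comp (lin_map_mull _) ant_lin).
  - apply: lin_map_sweedler_param => *.
    exact: lin_map_comp (Fr _) (lin_map_comp (lin_map_mull _) ant_lin).
have Phi_lin v :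
    lin_map (fun z => sweedler v (fun c d => sweedler z (fun s t => F (s * ant c) (t * ant d)))).
  by apply: lin_map_sweedler_param => c d; apply: lin_map_sweedler.
have FSS_lin : lin_map (fun v => sweedler v (fun c d => F (ant c) (ant d))).
  exact: lin_map_sweedler (bilin_comp F_bil ant_lin ant_lin).
transitivity (sweedler4 G x); last first.
  rewrite /sweedler4 /G -(sweedler_counitl x FSS_lin).
  apply: eq_sweedler => u v; rewrite (sweedler_antipodel u (Phi_lin v)).
  by congr (_ *: _); apply: eq_sweedler => c d; rewrite sweedler1 // !mul1r.
have inner a u : sweedler u (fun b w => sweedler w (G a b)) = cou u *: sweedler (ant a) F.
  transitivity (sweedler (ant a) (fun s1 s2 =>
    sweedler4 (fun t1 t2 c d => F (s1 * (t1 * ant c)) (s2 * (t2 * ant d))) u)).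
    rewrite /sweedler4 [RHS]sweedler_exchange; apply: eq_sweedler => b w.
    under [RHS]eq_sweedler => s1 s2 do rewrite sweedler_exchange.
    rewrite [RHS]sweedler_exchange; apply: eq_sweedler => c d.
    rewrite /G sweedler_mul //; apply: eq_sweedler => s1 s2; apply: eq_sweedler => t1 t2.
    by rewrite !mulrA.
  under eq_sweedler => s1 s2.
    rewrite (sweedler4_mul_ant u (bilin_comp F_bil (lin_map_mull s1) (lin_map_mull s2))) !mulr1.
    over.
  by rewrite /sweedler scaler_sumr.
rewrite sweedler4_right // -(sweedler_counitr x (lin_map_comp (lin_map_sweedler F_bil) ant_lin)).
by apply: eq_sweedler => a u; rewrite inner.
Qed.

End AntipodeCoalgebraMorphism.

(** * Linear forms and tensors with independent factors *)

Section Separation.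
Variables (K : fieldType) (V : lmodType K).

Definition subspace (W : V -> Prop) := W 0 /\ forall a x y, W x -> W y -> W (a *: x + y).

Section SubspaceTheory.
Variable W : V -> Prop.
Hypothesis W_sub : subspace W.

Lemma subspace0 : W 0. Proof. by case: W_sub. Qed.
Lemma subspaceD x y : W x -> W y -> W (x + y).
Proof. by move=> Wx Wy; rewrite -[x]scale1r; apply: (proj2 W_sub). Qed.
Lemma subspaceZ a x : W x -> W (a *: x).
Proof. by move=> Wx; rewrite -[_ *: _]addr0; apply: (proj2 W_sub) => //; apply: subspace0. Qed.
Lemma subspaceN x : W x -> W (- x).
Proof. by move=> Wx; rewrite -scaleN1r; apply: subspaceZ. Qed.
Lemma subspaceB x y : W x -> W y -> W (x - y).
Proof. by move=> Wx Wy; apply: subspaceD => //; apply: subspaceN. Qed.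
Lemma subspace_sum (I : eqType) (r : seq I) (F : I -> V) :
  {in r, forall i, W (F i)} -> W (\sum_(i <- r) F i).
Proof.
elim: r => [|i r IH] Fr; first by rewrite big_nil; apply: subspace0.
rewrite big_cons; apply: subspaceD; first by apply: Fr; rewrite mem_head.
by apply: IH => j jr; apply: Fr; rewrite inE jr orbT.
Qed.

End SubspaceTheory.

Section AvoidingSubspace.
Variables (U : V -> Prop) (z : V).
Hypotheses (U_sub : subspace U) (U_z : ~ U z).

Lemma ex_maximal_avoiding_subspace : exists A : V -> Prop,
  [/\ subspace A, (forall u, U u -> A u) & ~ A z] /\
  forall B, subspace B -> (forall a, A a -> B a) -> ~ B z -> forall y, B y -> A y.
Proof.
(* The empty set is let in only because it is the union of the empty chain. *)
pose avoiding W := [/\ subspace W, (forall u, U u -> W u) & ~ W z].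
pose P W := (forall x, ~ W x) \/ avoiding W.
have [F F_P F_chain|A [A_P A_max]] := @classical_sets.Zorn_bigcup V P.
  have [[X0 F_X0 [x0 X0_x0]]|F_empty] := classic (exists2 X, F X & exists x, X x); last first.
    by left=> x [X F_X Xx]; apply: F_empty; exists X => //; exists x.
  have F_avoid X x : F X -> X x -> avoiding X.
    by move=> F_X Xx; case: (F_P X F_X) => // /(_ x).
  have [X0_sub U_X0 _] := F_avoid X0 x0 F_X0 X0_x0.
  right; split; [split| |].
  - by exists X0; last exact: subspace0.
  - move=> a x y [X1 F_X1 X1_x] [X2 F_X2 X2_y].
    have [X1_sub _ _] := F_avoid X1 x F_X1 X1_x; have [X2_sub _ _] := F_avoid X2 y F_X2 X2_y.
    have [X12|X21] := F_chain X1 X2 F_X1 F_X2.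
    + by exists X2 => //; apply: (proj2 X2_sub) => //; apply: X12.
    + by exists X1 => //; apply: (proj2 X1_sub) => //; apply: X21.
  - by move=> u Uu; exists X0 => //; apply: U_X0.
  - by case=> X F_X Xz; have [_ _] := F_avoid X z F_X Xz.
have A_avoid : avoiding A.
  case: A_P => // A_empty; exfalso; apply: (A_max U); last by right.
  by split=> [t /A_empty|U_A]; last by apply: (A_empty 0); apply: U_A; apply: subspace0.
exists A; split=> // B B_sub AB B_z y By; apply: NNPP => A_y.
have [_ UA _] := A_avoid.
by apply: (A_max B); [split=> // BA; apply: A_y; apply: BA|right; split=> // u /UA /AB].
Qed.

Lemma ex_separating_form : exists phi : V -> K,
  [/\ lin_form phi, (forall u, U u -> phi u = 0) & phi z = 1].
Proof.
have [A [[A_sub UA A_z] A_max]] := ex_maximal_avoiding_subspace.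
have A_decomp y : exists l : K, A (y - l *: z).
  have [Ay|A_y] := classic (A y); first by exists 0; rewrite scale0r subr0.
  pose B w := exists a (m : K), A a /\ w = a + m *: y.
  have B_sub : subspace B.
    split; first by exists 0, 0; rewrite scale0r addr0; split=> //; apply: subspace0.
    move=> c _ _ [a1 [m1 [A1 ->]]] [a2 [m2 [A2 ->]]].
    exists (c *: a1 + a2), (c * m1 + m2); split; first by apply: (proj2 A_sub).
    by rewrite scalerDr scalerDl scalerA addrACA.
  have AB a : A a -> B a by exists a, 0; rewrite scale0r addr0.
  have [a [m [Aa z_eq]]] : B z.
    apply: NNPP => B_z; apply: A_y; apply: (A_max B) => //.
    by exists 0, 1; rewrite scale1r add0r; split=> //; apply: subspace0.
  have m_neq0 : m != 0 by apply: contra_notN A_z => /eqP m0; rewrite z_eq m0 scale0r addr0.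
  exists m^-1; rewrite z_eq scalerDr scalerA mulVf // scale1r opprD addrA addrAC subrr add0r.
  by apply: subspaceN => //; apply: subspaceZ.
have A_decomp_uniq y l l' : A (y - l *: z) -> A (y - l' *: z) -> l = l'.
  move=> Al Al'; apply: NNPP => /eqP l_neq; apply: A_z.
  have -> : z = (l - l')^-1 *: (y - l' *: z - (y - l *: z)).
    have -> : y - l' *: z - (y - l *: z) = (l - l') *: z.
      by rewrite scalerBl opprB addrC addrA subrK.
    by rewrite scalerA mulVf ?subr_eq0 // scale1r.
  by apply: subspaceZ => //; apply: subspaceB.
pose phi y := proj1_sig (constructive_indefinite_description _ (A_decomp y)).
have A_phi y : A (y - phi y *: z) by rewrite /phi; case: constructive_indefinite_description.
exists phi; split.
- move=> a x y; apply: (A_decomp_uniq (a *: x + y)) => //.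
  have := proj2 A_sub a _ _ (A_phi x) (A_phi y).
  by rewrite scalerDl scalerBr scalerA addrACA opprD.
- by move=> u Uu; apply: (A_decomp_uniq u) => //; rewrite scale0r subr0; apply: UA.
- by apply: (A_decomp_uniq z) => //; rewrite scale1r subrr; apply: subspace0.
Qed.

End AvoidingSubspace.

End Separation.

Section IndependentTensors.
Variable K : fieldType.
Implicit Types V W : lmodType K.

Definition lin_indep V (vs : seq V) :=
  forall c : nat -> K, \sum_(0 <= i < size vs) c i *: vs`_i = 0 ->
    forall i, (i < size vs)%N -> c i = 0.

Lemma big_nat_D1 (M : zmodType) (n k : nat) (G : nat -> M) : (k < n)%N ->
  \sum_(0 <= i < n) G i = G k + \sum_(0 <= i < n | i != k) G i.
Proof. by move=> kn; rewrite (bigD1_seq k) /= ?mem_iota ?iota_uniq ?add0n ?subn0. Qed.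

Lemma ex_dual_form V (vs : seq V) k : lin_indep vs -> (k < size vs)%N ->
  exists phi : V -> K, lin_form phi /\ forall i, (i < size vs)%N -> phi vs`_i = (i == k)%:R.
Proof.
move=> vs_indep kn; set n := size vs in kn *.
pose U w := exists c : nat -> K, w = \sum_(0 <= i < n | i != k) c i *: vs`_i.
have U_sub : subspace U.
  split; first by exists (fun _ => 0); rewrite big1 // => i _; rewrite scale0r.
  move=> a _ _ [c1 ->] [c2 ->]; exists (fun i => a * c1 i + c2 i).
  by rewrite scaler_sumr -big_split; apply: eq_bigr => i _; rewrite scalerDl scalerA.
have U_vk : ~ U vs`_k.
  case=> c vk_eq; have := vs_indep (fun i => if i == k then -1 else c i).
  rewrite (big_nat_D1 _ kn) eqxx scaleN1r.
  rewrite (eq_bigr (fun i => c i *: vs`_i)); last by move=> i /negbTE ->.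
  by rewrite -vk_eq addNr => /(_ erefl k kn); rewrite eqxx => /eqP; rewrite oppr_eq0 oner_eq0.
have [phi [phi_lin phi_U phi_vk]] := ex_separating_form U_sub U_vk.
exists phi; split=> // i ilt.
have [->|ik] := eqVneq i k; first by rewrite phi_vk.
rewrite phi_U //; exists (fun j => (j == i)%:R).
rewrite big_mkcond (bigD1_seq i) /= ?mem_iota ?iota_uniq ?add0n ?subn0 //.
rewrite ik eqxx scale1r big1 ?addr0 //.
by move=> j /negbTE ->; rewrite scale0r; case: ifP.
Qed.

Lemma tens_eq_trans V W (t1 t2 t3 : seq (V * W)) :
  tens_eq t1 t2 -> tens_eq t2 t3 -> tens_eq t1 t3.
Proof. by move=> t12 t23 M F F_bil; rewrite (t12 M F F_bil) (t23 M F F_bil). Qed.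

Definition tens_swap V W (t : seq (V * W)) := [seq (q.2, q.1) | q <- t].

Lemma tens_eq_swap V W (t t' : seq (V * W)) : tens_eq t t' -> tens_eq (tens_swap t) (tens_swap t').
Proof. by move=> tt' M F F_bil; rewrite !big_map; apply: tt' (bilin_flip F_bil). Qed.

Lemma tens_swapK V W : cancel (@tens_swap V W) (@tens_swap W V).
Proof. by move=> t; rewrite /tens_swap -map_comp map_id_in // => -[]. Qed.

(* A linear relation [sum_i c_i u_i = 0] with [c_k != 0] lets one absorb the summand
   [u_k (x) v_k] into the others: [u_i (x) v_i] becomes [u_i (x) (v_i - c_i/c_k v_k)]. *)
Lemma tens_eq_shorten V W (t : seq (V * W)) : ~ lin_indep (map fst t) ->
  exists t', (size t' < size t)%N /\ tens_eq t t'.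
Proof.
rewrite /lin_indep size_map => t_dep.
have [c [c_rel [k [kn ck]]]] : exists c : nat -> K,
    \sum_(0 <= i < size t) c i *: (map fst t)`_i = 0 /\ exists k, (k < size t)%N /\ c k != 0.
  apply: NNPP => no_rel; apply: t_dep => c c_rel i ilt; apply: NNPP => ci.
  by apply: no_rel; exists c; split=> //; exists i; split=> //; apply/eqP.
set n := size t in kn c_rel *.
pose u i := (nth (0, 0) t i).1; pose v i := (nth (0, 0) t i).2.
pose t' := [seq (u i, v i - (c i / c k) *: v k) | i <- [seq i <- iota 0 n | i != k]].
exists t'; split.
  rewrite size_map size_filter -[X in (_ < X)%N](size_iota 0 n) -(count_predC (predC1 k)).
  rewrite -[X in (X < _)%N]addn0 ltn_add2l -has_count.
  by apply/hasP; exists k; rewrite ?mem_iota //= eqxx.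
move=> M F F_bil; have Fl w := bilin_linl w F_bil; have Fr w := bilin_linr w F_bil.
have u_rel : \sum_(0 <= i < n | i != k) c i *: u i = - (c k *: u k).
  apply/eqP; rewrite -addr_eq0 addrC -big_nat_D1 // -[X in _ == X]c_rel.
  by apply/eqP/eq_big_nat => i /andP [_ ilt]; rewrite (nth_map (0, 0)).
rewrite /t' big_map big_filter (big_nth (0, 0)) (big_nat_D1 _ kn) -/n.
rewrite /index_iota subn0 in u_rel *.
under eq_bigr => i _ do rewrite (lin_mapB (Fr _)) (lin_mapZ (Fr _)).
rewrite big_split /= sumrN addrC; congr (_ + _).
have -> : \sum_(i <- iota 0 n | i != k) (c i / c k) *: F (u i) (v k) =
          F ((c k)^-1 *: \sum_(i <- iota 0 n | i != k) c i *: u i) (v k).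
  rewrite (lin_mapZ (Fl _)) (lin_map_sum (Fl _)) scaler_sumr.
  by apply: eq_bigr => i _; rewrite (lin_mapZ (Fl _)) scalerA mulrC.
by rewrite u_rel scalerN scalerA mulVf // scale1r (lin_mapN (Fl _)) opprK.
Qed.

Lemma ex_tens_indep V W (t0 : seq (V * W)) :
  exists t, tens_eq t0 t /\ lin_indep (map fst t) /\ lin_indep (map snd t).
Proof.
suff: forall n (t : seq (V * W)), (size t <= n)%N -> tens_eq t0 t ->
    exists t, tens_eq t0 t /\ lin_indep (map fst t) /\ lin_indep (map snd t).
  by apply; [apply: leqnn|move=> M F F_bil].
elim=> [|n IH] t.
  by rewrite leqn0 => /eqP /size0nil -> t0_t; exists [::].
move=> t_size t0_t.
have [fst_indep|fst_dep] := classic (lin_indep (map fst t)); last first.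
  have [t' [t'_size t_t']] := tens_eq_shorten fst_dep.
  by apply: (IH t'); [rewrite -ltnS (leq_trans t'_size)|apply: tens_eq_trans t_t'].
have [snd_indep|snd_dep] := classic (lin_indep (map snd t)); first by exists t.
have swap_dep : ~ lin_indep (map fst (tens_swap t)) by rewrite /tens_swap -map_comp.
have [t' [t'_size t_t']] := tens_eq_shorten swap_dep.
apply: (IH (tens_swap t')).
  by rewrite size_map -ltnS (leq_trans t'_size) // size_map.
by apply: tens_eq_trans t0_t _; rewrite -[t]tens_swapK; apply: tens_eq_swap.
Qed.

Lemma ex_contraction_nth_snd V W (t : seq (V * W)) k :
  lin_indep (map fst t) -> (k < size t)%N ->
  exists phi : V -> K, lin_form phi /\ (nth (0, 0) t k).2 = \sum_(q <- t) phi q.1 *: q.2.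
Proof.
move=> fst_indep kt; have kt' : (k < size (map fst t))%N by rewrite size_map.
have [phi [phi_lin phi_dual]] := ex_dual_form fst_indep kt'.
have phi_t i : (i < size t)%N -> phi (nth (0, 0) t i).1 = (i == k)%:R.
  by move=> it; rewrite -(nth_map _ 0) ?phi_dual ?size_map.
exists phi; split=> //; rewrite (big_nth (0, 0)) (big_nat_D1 _ kt) phi_t // eqxx scale1r.
rewrite big_nat_cond big1 ?addr0 // => i /andP [/andP [_ it] ik].
by rewrite phi_t ?(negbTE ik) ?scale0r.
Qed.

End IndependentTensors.

(** * The h-inverse image [p^{-1}(C)] *)

Lemma ForallP (T : eqType) (P : T -> Prop) (s : seq T) :
  List.Forall P s <-> {in s, forall x, P x}.
Proof.
elim: s => [|y s IH]; first by split=> // _ x.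
rewrite List.Forall_cons_iff IH; split=> [[Py Ps] x|Ps].
  by rewrite inE => /orP [/eqP ->|/Ps].
by split=> [|x xs]; apply: Ps; rewrite ?mem_head // inE xs orbT.
Qed.

Section HopfSubalgebra.
Variables (K : fieldType) (B : hopfType K) (C : B -> Prop).
Hypothesis C_sub : hopf_subalg C.

Lemma subalg_subspace : subspace C.
Proof.
case: C_sub => C1 C_lin _ _ _; split=> //.
by have := C_lin (-1) 1 1 C1 C1; rewrite scaleN1r addNr.
Qed.

Lemma subalg1 : C 1. Proof. by case: C_sub. Qed.
Lemma subalgM x y : C x -> C y -> C (x * y). Proof. by case: C_sub => _ _ CM _ _; apply: CM. Qed.
Lemma subalg_ant x : C x -> C (ant x). Proof. by case: C_sub => _ _ _ CS _; apply: CS. Qed.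

End HopfSubalgebra.

Section HopfInverseImage.
Variables (K : fieldType) (A B : hopfType K) (p : A -> B) (C : B -> Prop).
Hypotheses (p_morph : hopf_morph p) (C_sub : hopf_subalg C).

Definition hinv_rep (x : A) (t : seq (B * A)) :=
  {in t, forall q, augm C q.1} /\
  forall (M : lmodType K) (F : B -> A -> M), bilin F ->
    sweedler x (fun a b => F (p a) b) = F 1 x + \sum_(q <- t) F q.1 q.2.

Lemma hinvP x : hinv p C x <-> exists t, hinv_rep x t.
Proof.
split=> -[t [t_augm t_eq]]; exists t; split=> [|M F F_bil]; try exact/ForallP.
- have := t_eq M F F_bil; rewrite big_cat big_map big_seq1 /= => <-.
  by rewrite (lin_mapN (bilin_linl _ F_bil)) addrC addrA subrr add0r.
- rewrite big_cat big_map big_seq1 /=; have := t_eq M F F_bil; rewrite /sweedler => ->.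
  by rewrite (lin_mapN (bilin_linl _ F_bil)) addrAC subrr add0r.
Qed.

Lemma bilin_hmorphl (M : lmodType K) (F : B -> A -> M) : bilin F -> bilin (fun a b => F (p a) b).
Proof. by move=> F_bil; apply: bilin_comp F_bil (hmorph_lin p_morph) (lin_map_id A). Qed.

Lemma hinv_morph_in x : hinv p C x -> C (p x).
Proof.
case/hinvP=> t [t_augm t_eq].
have := t_eq _ _ (bilin_flip (bilin_scale_form B (cou_lin_form (H := A)))).
rewrite (sweedler_counitr x (hmorph_lin p_morph)) => ->.
have C_sp := subalg_subspace C_sub.
apply: (subspaceD C_sp); first exact: (subspaceZ C_sp) (subalg1 C_sub).
by apply: (subspace_sum C_sp) => q /t_augm [Cq _]; apply: (subspaceZ C_sp).
Qed.

Lemma hinv1 : hinv p C 1.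
Proof.
apply/hinvP; exists [::]; split=> // M F F_bil.
by rewrite sweedler1 ?(hmorph1 p_morph) ?big_nil ?addr0 //; apply: bilin_hmorphl.
Qed.

Lemma hinv_lincomb a x y : hinv p C x -> hinv p C y -> hinv p C (a *: x + y).
Proof.
case/hinvP=> tx [tx_augm tx_eq]; case/hinvP=> ty [ty_augm ty_eq]; apply/hinvP.
exists ([seq (a *: q.1, q.2) | q <- tx] ++ ty); split.
  move=> ?; rewrite mem_cat => /orP [/mapP [q /tx_augm [Cq cq] ->]|/ty_augm //].
  split; first exact: (subspaceZ (subalg_subspace C_sub)).
  by rewrite (lin_formZ (cou_lin_form (H := B))) cq mulr0.
move=> M F F_bil; have Fl w := bilin_linl w F_bil; have Fr v := bilin_linr v F_bil.
rewrite (lin_map_sweedler (bilin_hmorphl F_bil)) tx_eq // ty_eq // big_cat big_map /=.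
under [X in _ = _ + (X + _)]eq_bigr do rewrite (lin_mapZ (Fl _)).
by rewrite (lin_mapD (Fr _)) (lin_mapZ (Fr _)) -scaler_sumr scalerDr addrACA.
Qed.

Lemma hinvM x y : hinv p C x -> hinv p C y -> hinv p C (x * y).
Proof.
case/hinvP=> tx [tx_augm tx_eq]; case/hinvP=> ty [ty_augm ty_eq]; apply/hinvP.
exists ([seq (q.1, q.2 * y) | q <- tx] ++ [seq (q.1, x * q.2) | q <- ty] ++
        [seq (q.1 * r.1, q.2 * r.2) | q <- tx, r <- ty]); split.
  move=> ?; rewrite !mem_cat => /or3P [/mapP [q /tx_augm ? ->]|/mapP [q /ty_augm ? ->]|] //.
  case/allpairsP=> -[q r] [/tx_augm [Cq cq] /ty_augm [Cr cr] ->] /=.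
  by split; [apply: (subalgM C_sub)|rewrite couM cq mul0r].
move=> M F F_bil.
have F_mull a b : bilin (fun u v => F (p a * u) (b * v)).
  exact: bilin_comp F_bil (lin_map_mull _) (lin_map_mull _).
have F_mulr c d : bilin (fun u v => F (u * c) (v * d)).
  exact: bilin_comp F_bil (lin_map_mulr _) (lin_map_mulr _).
rewrite sweedler_mul; last exact: bilin_hmorphl.
under eq_sweedler => a b.
  rewrite (eq_sweedler _ (fun c d => congr1 (F ^~ _) (hmorphM p_morph a c))).
  rewrite (ty_eq _ _ (F_mull a b)).
  over.
have tx_mulr c d : \sum_(q <- cop x) F (p q.1 * c) (q.2 * d) =
                   F c (x * d) + \sum_(q <- tx) F (q.1 * c) (q.2 * d).
  by have := tx_eq _ _ (F_mulr c d); rewrite mul1r.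
rewrite /sweedler big_split /= tx_mulr exchange_big /=.
rewrite [X in _ + X = _](eq_bigr _ (fun j _ => tx_mulr j.1 j.2)) big_split /=.
rewrite !big_cat !big_map big_allpairs_dep /= [X in _ + (_ + (_ + X))]exchange_big.
by under eq_bigr do rewrite mulr1; rewrite !addrA.
Qed.

Lemma hinv_ant x : hinv p C x -> hinv p C (ant x).
Proof.
case/hinvP=> tx [tx_augm tx_eq]; apply/hinvP.
exists [seq (ant q.1, ant q.2) | q <- tx]; split.
  move=> _ /mapP [q /tx_augm [Cq cq] ->] /=.
  by split; [apply: (subalg_ant C_sub)|rewrite cou_ant].
move=> M F F_bil; have ant_lin := @ant_lin_map K.
rewrite sweedler_ant; last exact: bilin_hmorphl.
rewrite (eq_sweedler _ (fun a b => congr1 (F ^~ _) (hmorph_ant p_morph a))).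
by rewrite (tx_eq _ _ (bilin_comp F_bil (ant_lin B) (ant_lin A))) ant1 big_map.
Qed.

Lemma hinv_contract (phi : A -> K) x : lin_form phi -> hinv p C x ->
  hinv p C (sweedler x (fun a b => phi a *: b)).
Proof.
move=> phi_lin /hinvP [tx [tx_augm tx_eq]]; apply/hinvP.
pose L a := sweedler a (fun u v => phi u *: v).
have L_lin : lin_map L by apply: lin_map_sweedler; apply: bilin_scale_form.
exists [seq (q.1, L q.2) | q <- tx]; split; first by move=> _ /mapP [q /tx_augm ? ->].
move=> M F F_bil; have Fl w := bilin_linl w F_bil; have Fr v := bilin_linr v F_bil.
have p_lin := hmorph_lin p_morph.
have Fp_bil := bilin_hmorphl F_bil.
have phiF_bil v : bilin (fun a b => phi a *: F (p b) v).
  apply: bilinP => *; first exact: lin_map_scale_form.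
  exact: lin_map_scale (lin_map_comp (Fl _) p_lin).
transitivity (sweedler x (fun u v => F (p u) (L v))).
  transitivity (sweedler x (fun u v => sweedler v (fun b c => phi u *: F (p b) c))).
    rewrite [sweedler x _]/sweedler (lin_map_sum (lin_map_sweedler Fp_bil)).
    by apply: eq_bigr => q _; rewrite (lin_mapZ (lin_map_sweedler Fp_bil)) /sweedler scaler_sumr.
  rewrite -(sweedler_coassoc (g := fun a b c => phi a *: F (p b) c)); last first.
    apply: trilinP => *; [exact: lin_map_scale_form|
                          exact: lin_map_scale (lin_map_comp (Fl _) p_lin)|exact: lin_map_scale].
  under eq_sweedler => u v do rewrite (sweedler_cocomm _ (phiF_bil v)).
  rewrite (sweedler_coassoc (g := fun a b c => phi b *: F (p a) c)); last first.
    apply: trilinP => *; [exact: lin_map_scale (lin_map_comp (Fl _) p_lin)|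
                          exact: lin_map_scale_form|exact: lin_map_scale].
  apply: eq_sweedler => u v; rewrite /L /sweedler (lin_map_sum (Fr _)).
  by apply: eq_bigr => q _; rewrite (lin_mapZ (Fr _)).
by rewrite (tx_eq _ _ (bilin_comp F_bil (lin_map_id B) L_lin)) big_map.
Qed.

Lemma hinv_cop x : hinv p C x -> exists t : seq (A * A),
  List.Forall (fun q => hinv p C q.1 /\ hinv p C q.2) t /\ tens_eq (cop x) t.
Proof.
move=> hinv_x; have [t [x_t [fst_indep snd_indep]]] := ex_tens_indep (cop x).
have contract_snd phi : lin_form phi -> hinv p C (\sum_(q <- t) phi q.1 *: q.2).
  move=> phi_lin; rewrite -(x_t _ _ (bilin_scale_form A phi_lin)).
  exact: hinv_contract.
have contract_fst phi : lin_form phi -> hinv p C (\sum_(q <- t) phi q.2 *: q.1).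
  move=> phi_lin; rewrite -(x_t _ _ (bilin_flip (bilin_scale_form A phi_lin))).
  by have := hinv_contract phi_lin hinv_x; rewrite sweedler_cocomm //; apply: bilin_scale_form.
exists t; split=> //; apply/ForallP => _ /(nthP (0, 0)) [k kt <-]; split.
- have swap_indep : lin_indep (map fst (tens_swap t)) by rewrite /tens_swap -map_comp.
  have swap_kt : (k < size (tens_swap t))%N by rewrite size_map.
  have [phi [phi_lin]] := ex_contraction_nth_snd swap_indep swap_kt.
  by rewrite (nth_map (0, 0)) // big_map /= => ->; apply: contract_fst.
- have [phi [phi_lin ->]] := ex_contraction_nth_snd fst_indep kt.
  exact: contract_snd.
Qed.

Lemma hopf_subalg_hinv : hopf_subalg (hinv p C).
Proof.
split; [exact: hinv1| |exact: hinvM|exact: hinv_ant|exact: hinv_cop].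
by move=> a x y; apply: hinv_lincomb.
Qed.

Lemma hinv_factor (D : hopfType K) (f : D -> A) (g : D -> B) :
  hopf_morph f -> hopf_morph g -> (forall d, C (g d)) -> (forall d, p (f d) = g d) ->
  forall d, hinv p C (f d).
Proof.
move=> f_morph g_morph Cg pf_g d; apply/hinvP.
exists [seq (g q.1 - cou q.1 *: 1, f q.2) | q <- cop d]; split.
  move=> _ /mapP [q _ ->] /=; have C_sp := subalg_subspace C_sub; split.
    by apply: (subspaceB C_sp) => //; apply: (subspaceZ C_sp); apply: subalg1.
  rewrite (lin_formB (cou_lin_form (H := B))) (lin_formZ (cou_lin_form (H := B))).
  by rewrite cou1 mulr1 (hmorph_cou g_morph) subrr.
move=> M F F_bil; have Fl w := bilin_linl w F_bil.
rewrite (sweedler_hmorph f_morph d (bilin_hmorphl F_bil)) big_map /=.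
under [in RHS]eq_bigr do rewrite (lin_mapB (Fl _)) (lin_mapZ (Fl _)).
rewrite big_split /= sumrN.
have -> : \sum_(q <- cop d) cou q.1 *: F 1 (f q.2) = F 1 (f d).
  exact: sweedler_counitl d (lin_map_comp (bilin_linr 1 F_bil) (hmorph_lin f_morph)).
by rewrite addrCA subrr addr0; apply: eq_bigr => q _; rewrite pf_g.
Qed.

End HopfInverseImage.

Unset Implicit Arguments.

Theorem lemma2p6 (K : fieldType) (A B : hopfType K) (p : A -> B) (C : B -> Prop) :
  hopf_morph p -> hopf_subalg C ->
  (* p(p^{-1}(C)) is contained in C, so  p^ : p^{-1}(C) -> C  is defined *)
  (forall x : A, hinv p C x -> C (p x)) /\
  (* p^{-1}(C) is a Hopf subalgebra of A, hence an object of Hopf_{K,coc} *)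
  hopf_subalg (hinv p C) /\
  (* universal property of the pullback of  i : C -> B  along  p : A -> B,
     with legs  j : p^{-1}(C) -> A  and  p^ : p^{-1}(C) -> C *)
  (forall (D : hopfType K) (f : D -> A) (g : D -> {y : B | C y}),
     hopf_morph f -> hopf_morph (fun d => proj1_sig (g d)) ->
     (forall d, p (f d) = proj1_sig (g d)) ->
     exists! h : D -> {x : A | hinv p C x},
       hopf_morph (fun d => proj1_sig (h d)) /\
       (forall d, proj1_sig (h d) = f d) /\
       (forall d, p (proj1_sig (h d)) = proj1_sig (g d))).
Proof.
move=> p_morph C_sub; split; first exact: hinv_morph_in.
split; first exact: hopf_subalg_hinv.
move=> D f g f_morph g_morph pf_g.
have hinv_f := hinv_factor p_morph C_sub f_morph g_morph (fun d => proj2_sig (g d)) pf_g.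
exists (fun d => exist _ (f d) (hinv_f d)); split=> // h [_ [h_f _]].
apply: functional_extensionality => d; case: (h d) (h_f d) => /= x hinv_x x_f.
exact: subset_eq_compat (esym x_f).
Qed.
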